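(* Let $d\ge1$ and let $X\subset S^d$ be a spherical $4$-design that is antipodal ($X=-X$). Let $X'=\{x_1,\dots,x_M\}\subset X$ be any subset with $|X'|=|X|/2$ containing no pair of antipodal vectors. Then the multiset $\widetilde{G_{X'}}=\{G_{x_1},\dots,G_{x_M}\}\cup\{-G_{x_1},\dots,-G_{x_M}\}$ (of $2M$ points, counted with multiplicity) is a spherical $3$-design in the unit sphere $S^{D-1}$ of $\mathrm{Harm}_2(S^d)\cong\mathbb{R}^D$, $D=d(d+3)/2$.
   Context: A finite nonempty multiset $Y$ in a unit sphere $S^{m}\subset\mathbb{R}^{m+1}$ is a spherical $t$-design if $\frac{1}{|Y|}\sum_{y\in Y}f(y)=\int_{S^m}f\,d\sigma$ for every polynomial $f$ on $\mathbb{R}^{m+1}$ of degree at most $t$ (points counted with multiplicity, $\sigma$ normalized surface measure). $\mathrm{Harm}_2(S^d)$ denotes the real vector space (of dimension $D=d(d+3)/2$) of restrictions to $S^d$ of homogeneous harmonic polynomials of degree $2$ on $\mathbb{R}^{d+1}$, with inner product $\langle P,Q\rangle=\int_{S^d}PQ\,d\sigma$, identified with $\mathbb{R}^D$ via an orthonormal basis. For $x\in S^d$ let $K_x\in\mathrm{Harm}_2(S^d)$ be the reproducing element ($\langle K_x,Q\rangle=Q(x)$ for all $Q$) and $G_x=K_x/\|K_x\|$; then $\langle G_x,G_y\rangle=\frac{d+1}{d}(x,y)^2-\frac1d$. *)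

From Stdlib Require Import Reals List Arith.
Import ListNotations.
Open Scope R_scope.

Definition rsum (l : list R) : R := fold_right Rplus 0 l.
Definition rprod (l : list R) : R := fold_right Rmult 1 l.

Definition point := list R.
Definition dot (x y : point) : R :=
  rsum (map (fun p => fst p * snd p) (combine x y)).
(* S^(n-1) in R^n *)
Definition on_sphere (n : nat) (x : point) : Prop := length x = n /\ dot x x = 1.
Definition vneg (x : point) : point := map Ropp x.

(* Polynomials on R^n: finite linear combinations of monomials x^a,
   a an exponent vector (list of n naturals). *)
Definition expo := list nat.
Definition monomial (a : expo) (x : point) : R :=
  rprod (map (fun p => fst p ^ snd p) (combine x a)).
Definition expo_deg (a : expo) : nat := list_sum a.
Definition poly := list (R * expo).
Definition poly_eval (p : poly) (x : point) : R :=
  rsum (map (fun t => fst t * monomial (snd t) x) p).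
Definition poly_on (n t : nat) (p : poly) : Prop :=
  Forall (fun ca => length (snd ca) = n /\ (expo_deg (snd ca) <= t)%nat) p.

(* oddfact b = (2b-1)!! *)
Fixpoint oddfact (b : nat) : R :=
  match b with 0%nat => 1 | S b' => INR (2 * b' + 1) * oddfact b' end.

(* Integral of the monomial x^a against the normalized surface measure of
   S^(n-1) in R^n: zero unless all a_i are even (a_i = 2 b_i), in which case
   prod_i (2b_i-1)!! / (n (n+2) ... (n + 2(|b|-1))). *)
Definition sphere_moment (n : nat) (a : expo) : R :=
  if forallb Nat.even a then
    rprod (map (fun ai => oddfact (Nat.div2 ai)) a) /
    rprod (map (fun k => INR (n + 2 * k)) (seq 0 (Nat.div2 (expo_deg a))))
  else 0.

Definition sphere_avg (n : nat) (p : poly) : R :=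
  rsum (map (fun t => fst t * sphere_moment n (snd t)) p).

(* Y (a finite nonempty multiset = list) is a spherical t-design in S^(n-1) ⊂ R^n *)
Definition spherical_design (n t : nat) (Y : list point) : Prop :=
  Y <> [] /\ Forall (on_sphere n) Y /\
  forall p : poly, poly_on n t p ->
    rsum (map (poly_eval p) Y) / INR (length Y) = sphere_avg n p.

(* Harm_2 on R^n: homogeneous quadratic harmonic polynomials x |-> x^T A x,
   represented by symmetric traceless matrices A (Laplacian = 2 tr A). *)
Definition mat := nat -> nat -> R.
Definition unit_expo (n i : nat) : expo :=
  map (fun k => if Nat.eqb k i then 1%nat else 0%nat) (seq 0 n).
Definition add_expo (a b : expo) : expo :=
  map (fun p => (fst p + snd p)%nat) (combine a b).
Definition quad_poly (n : nat) (A : mat) : poly :=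
  flat_map (fun i => map (fun j => (A i j, add_expo (unit_expo n i) (unit_expo n j)))
                         (seq 0 n)) (seq 0 n).
Definition poly_mul (p q : poly) : poly :=
  flat_map (fun s => map (fun t => (fst s * fst t, add_expo (snd s) (snd t))) q) p.

Definition is_harm2 (n : nat) (A : mat) : Prop :=
  (forall i j, (i < n)%nat -> (j < n)%nat -> A i j = A j i) /\
  rsum (map (fun i => A i i) (seq 0 n)) = 0.

Definition harm_ip (n : nat) (A B : mat) : R :=
  sphere_avg n (poly_mul (quad_poly n A) (quad_poly n B)).

Definition mscale (c : R) (A : mat) : mat := fun i j => c * A i j.

Definition is_reproducing (n : nat) (x : point) (K : mat) : Prop :=
  is_harm2 n K /\
  forall Q, is_harm2 n Q -> harm_ip n K Q = poly_eval (quad_poly n Q) x.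

Definition G_of (n : nat) (K : mat) : mat := mscale (/ sqrt (harm_ip n K K)) K.

(* E_0..E_{D-1} orthonormal family (hence basis, D = dim) of Harm_2 *)
Definition orthonormal_basis (n D : nat) (E : nat -> mat) : Prop :=
  (forall j, (j < D)%nat -> is_harm2 n (E j)) /\
  (forall i j, (i < D)%nat -> (j < D)%nat ->
     harm_ip n (E i) (E j) = if Nat.eqb i j then 1 else 0).

Definition coords (n D : nat) (E : nat -> mat) (A : mat) : point :=
  map (fun j => harm_ip n A (E j)) (seq 0 D).

(* By the reproducing property, the j-th coordinate of G_x in the basis E is
   E_j(x) / sqrt D, because ||K_x||^2 = K_x(x) = D: comparing K_x with the
   explicit kernel (n(n+2)/2) (x x^T - I/n), n = d+1, through the fourth
   moments of the sphere.  Since X is a 4-design, the inner product of two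
   quadratic forms is their average over X.  Hence Bessel's inequality
   sum_j E_j(x)^2 <= D is an equality at every point of X (no spanning
   assumption on E is needed), so each G_x lies on the unit sphere, and,
   X being X' together with -X', the second moments of {G_x : x in X'} are
   |X'| delta_pq / D.  An antipodal set with these second moments is a
   3-design, its odd moments vanishing by symmetry. *)

From Stdlib Require Import Reals List Arith.
From Stdlib Require Import Permutation Lia Lra.
Import ListNotations.
Open Scope R_scope.

Lemma rsum_app l1 l2 : rsum (l1 ++ l2) = rsum l1 + rsum l2.
Proof. induction l1 as [|a l1 IH]; simpl; [ring | rewrite IH; ring]. Qed.

Lemma rsum_map_plus {A} (f g : A -> R) l :
  rsum (map (fun x => f x + g x) l) = rsum (map f l) + rsum (map g l).
Proof. induction l as [|a l IH]; simpl; [ring | rewrite IH; ring]. Qed.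

Lemma rsum_map_scal {A} c (f : A -> R) l :
  rsum (map (fun x => c * f x) l) = c * rsum (map f l).
Proof. induction l as [|a l IH]; simpl; [ring | rewrite IH; ring]. Qed.

Lemma rsum_map_ext {A} (f g : A -> R) l :
  (forall x, In x l -> f x = g x) -> rsum (map f l) = rsum (map g l).
Proof.
  induction l as [|a l IH]; simpl; intros Hfg; auto.
  rewrite Hfg, IH; auto.
Qed.

Lemma rsum_map_swap {A B} (f : A -> B -> R) l1 l2 :
  rsum (map (fun x => rsum (map (fun y => f x y) l2)) l1) =
  rsum (map (fun y => rsum (map (fun x => f x y) l1)) l2).
Proof.
  induction l1 as [|a l1 IH]; simpl.
  - induction l2 as [|b l2 IH2]; simpl; auto. rewrite <- IH2; ring.
  - rewrite IH, <- rsum_map_plus. reflexivity.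
Qed.

Lemma rsum_map_const {A} c (l : list A) : rsum (map (fun _ => c) l) = INR (length l) * c.
Proof.
  induction l as [|a l IH]; simpl length; [simpl; ring |].
  rewrite S_INR. simpl. rewrite IH. ring.
Qed.

Lemma rsum_map_nonneg {A} (f : A -> R) l :
  (forall x, In x l -> 0 <= f x) -> 0 <= rsum (map f l).
Proof.
  induction l as [|a l IH]; simpl; intros Hf; [lra |].
  pose proof (Hf a (or_introl eq_refl)).
  pose proof (IH (fun x Hx => Hf x (or_intror Hx))). lra.
Qed.

Lemma rsum_map_nonneg_eq0 {A} (f : A -> R) l :
  (forall x, In x l -> 0 <= f x) -> rsum (map f l) = 0 -> forall x, In x l -> f x = 0.
Proof.
  induction l as [|a l IH]; simpl; intros Hf Hsum x Hx; [contradiction |].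
  pose proof (Hf a (or_introl eq_refl)).
  pose proof (rsum_map_nonneg f l (fun y Hy => Hf y (or_intror Hy))).
  destruct Hx as [<- | Hx]; [lra |]. apply IH; auto; lra.
Qed.

Lemma rsum_perm l l' : Permutation l l' -> rsum l = rsum l'.
Proof. induction 1; simpl; auto; try ring; congruence. Qed.

Lemma rsum_flat_map {A B} (f : B -> R) (g : A -> list B) l :
  rsum (map f (flat_map g l)) = rsum (map (fun a => rsum (map f (g a))) l).
Proof. induction l as [|a l IH]; simpl; auto. rewrite map_app, rsum_app, IH. reflexivity. Qed.

Definition sumn (n : nat) (f : nat -> R) : R := rsum (map f (seq 0 n)).

Lemma sumn_ext n f g : (forall k, (k < n)%nat -> f k = g k) -> sumn n f = sumn n g.
Proof. intros Hfg. apply rsum_map_ext. intros k Hk. apply in_seq in Hk. apply Hfg. lia. Qed.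

Lemma sumn_S n f : sumn (S n) f = sumn n f + f n.
Proof. unfold sumn. rewrite seq_S, map_app, rsum_app. simpl. ring. Qed.

Lemma sumn_plus n f g : sumn n (fun k => f k + g k) = sumn n f + sumn n g.
Proof. apply rsum_map_plus. Qed.

Lemma sumn_scal n c f : sumn n (fun k => c * f k) = c * sumn n f.
Proof. apply rsum_map_scal. Qed.

Lemma sumn_const n c : sumn n (fun _ => c) = INR n * c.
Proof. unfold sumn. rewrite rsum_map_const, length_seq. reflexivity. Qed.

Lemma sumn_swap n m (f : nat -> nat -> R) :
  sumn n (fun i => sumn m (fun j => f i j)) = sumn m (fun j => sumn n (fun i => f i j)).
Proof. apply rsum_map_swap. Qed.

Lemma sumn_mul_r n f c : sumn n f * c = sumn n (fun i => f i * c).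
Proof. rewrite Rmult_comm, <- sumn_scal. apply sumn_ext. intros. ring. Qed.

Lemma rsum_map_sumn {A} n (f : nat -> A -> R) l :
  rsum (map (fun x => sumn n (fun j => f j x)) l) = sumn n (fun j => rsum (map (f j) l)).
Proof. apply rsum_map_swap. Qed.

Lemma sumn_single n a f :
  (a < n)%nat -> (forall k, (k < n)%nat -> k <> a -> f k = 0) -> sumn n f = f a.
Proof.
  induction n as [|n IH]; intros Ha Hf; [lia |]. rewrite sumn_S.
  destruct (Nat.eq_dec a n) as [-> | Hne].
  - rewrite (sumn_ext n f (fun _ => 0)), sumn_const by (intros k Hk; apply Hf; lia). ring.
  - rewrite IH, (Hf n) by (auto; lia). ring.
Qed.

Definition kdelta (i j : nat) : R := if Nat.eqb i j then 1 else 0.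

Lemma kdelta_refl i : kdelta i i = 1.
Proof. unfold kdelta. rewrite Nat.eqb_refl. reflexivity. Qed.

Lemma sumn_kdelta n a f : (a < n)%nat -> sumn n (fun k => kdelta a k * f k) = f a.
Proof.
  intros Ha. rewrite (sumn_single n a); auto.
  - rewrite kdelta_refl. ring.
  - intros k _ Hne. unfold kdelta. destruct (Nat.eqb_spec a k); [congruence | ring].
Qed.

Lemma rprod_app l1 l2 : rprod (l1 ++ l2) = rprod l1 * rprod l2.
Proof. induction l1 as [|a l1 IH]; simpl; [ring | rewrite IH; ring]. Qed.

Definition prodn (n : nat) (f : nat -> R) : R := rprod (map f (seq 0 n)).

Lemma prodn_single n a f :
  (a < n)%nat -> (forall k, (k < n)%nat -> k <> a -> f k = 1) -> prodn n f = f a.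
Proof.
  intros Ha Hf.
  assert (Hone : forall l, (forall k, In k l -> f k = 1) -> rprod (map f l) = 1).
  { induction l as [|b l IH]; simpl; intros Hl; auto. rewrite Hl, IH; auto. ring. }
  unfold prodn. replace n with (a + S (n - S a))%nat at 1 by lia.
  rewrite seq_app, map_app, rprod_app. simpl.
  rewrite !Hone; [ring | |]; intros k Hk; apply in_seq in Hk; apply Hf; lia.
Qed.

Definition xi (x : point) (i : nat) : R := nth i x 0.

Definition quad_form (n : nat) (A : mat) (x : point) : R :=
  sumn n (fun i => sumn n (fun j => A i j * (xi x i * xi x j))).

Lemma length_add_expo a b : length (add_expo a b) = Nat.min (length a) (length b).
Proof. unfold add_expo. rewrite length_map, length_combine. reflexivity. Qed.

Lemma length_unit_expo n i : length (unit_expo n i) = n.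
Proof. unfold unit_expo. rewrite length_map, length_seq. reflexivity. Qed.

Lemma monomial_add_expo a b x : length a = length x -> length b = length x ->
  monomial (add_expo a b) x = monomial a x * monomial b x.
Proof.
  revert a b. induction x as [|x0 x IH]; intros [|a0 a] [|b0 b] Ha Hb;
    simpl in Ha, Hb; try discriminate.
  - unfold monomial. simpl. ring.
  - injection Ha as Ha. injection Hb as Hb. specialize (IH a b Ha Hb).
    unfold monomial, add_expo in *. simpl. rewrite IH, pow_add. ring.
Qed.

Lemma monomial_map n f x : length x = n ->
  monomial (map f (seq 0 n)) x = prodn n (fun k => xi x k ^ f k).
Proof.
  intros <-. unfold monomial, prodn, xi. revert f.
  induction x as [|x0 x IH]; intros f; simpl; auto.
  rewrite <- seq_shift, !map_map, (IH (fun k => f (S k))). reflexivity.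
Qed.

Lemma monomial_unit_expo n i x : (i < n)%nat -> length x = n ->
  monomial (unit_expo n i) x = xi x i.
Proof.
  intros Hi Hx. unfold unit_expo. rewrite monomial_map, (prodn_single n i); auto.
  - rewrite Nat.eqb_refl. ring.
  - intros k _ Hk. apply Nat.eqb_neq in Hk. rewrite Hk. reflexivity.
Qed.

Lemma monomial_unit_expo2 n i j x : (i < n)%nat -> (j < n)%nat -> length x = n ->
  monomial (add_expo (unit_expo n i) (unit_expo n j)) x = xi x i * xi x j.
Proof.
  intros Hi Hj Hx.
  rewrite monomial_add_expo, !monomial_unit_expo by (rewrite ?length_unit_expo; auto).
  reflexivity.
Qed.

Lemma rsum_quad_poly (F : R * expo -> R) n A :
  rsum (map F (quad_poly n A)) =
  sumn n (fun i => sumn n (fun j => F (A i j, add_expo (unit_expo n i) (unit_expo n j)))).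
Proof.
  unfold quad_poly. rewrite rsum_flat_map. apply rsum_map_ext. intros i _.
  rewrite map_map. reflexivity.
Qed.

Lemma rsum_poly_mul (F : R * expo -> R) p q :
  rsum (map F (poly_mul p q)) =
  rsum (map (fun s => rsum (map (fun t => F (fst s * fst t, add_expo (snd s) (snd t))) q)) p).
Proof.
  unfold poly_mul. rewrite rsum_flat_map. apply rsum_map_ext. intros s _.
  rewrite map_map. reflexivity.
Qed.

Lemma poly_eval_quad n A x : length x = n -> poly_eval (quad_poly n A) x = quad_form n A x.
Proof.
  intros Hx. unfold poly_eval. rewrite rsum_quad_poly.
  apply sumn_ext; intros i Hi. apply sumn_ext; intros j Hj. simpl.
  rewrite monomial_unit_expo2; auto.
Qed.

Lemma poly_eval_quad_mul n A B x : length x = n ->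
  poly_eval (poly_mul (quad_poly n A) (quad_poly n B)) x = quad_form n A x * quad_form n B x.
Proof.
  intros Hx. unfold poly_eval. rewrite rsum_poly_mul, rsum_quad_poly.
  unfold quad_form. rewrite sumn_mul_r.
  apply sumn_ext; intros i Hi. rewrite sumn_mul_r.
  apply sumn_ext; intros j Hj. rewrite rsum_quad_poly, <- sumn_scal.
  apply sumn_ext; intros k Hk. rewrite <- sumn_scal.
  apply sumn_ext; intros l Hl. simpl.
  rewrite monomial_add_expo, !monomial_unit_expo2
    by (rewrite ?length_add_expo, ?length_unit_expo; lia).
  ring.
Qed.

Lemma expo_deg_add_expo a b : length a = length b ->
  expo_deg (add_expo a b) = (expo_deg a + expo_deg b)%nat.
Proof.
  revert b. induction a as [|a0 a IH]; intros [|b0 b] Hab; simpl in Hab; try discriminate.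
  - reflexivity.
  - injection Hab as Hab. unfold expo_deg, add_expo in *. simpl. rewrite IH; auto. lia.
Qed.

Lemma expo_deg_unit_expo n i : (i < n)%nat -> expo_deg (unit_expo n i) = 1%nat.
Proof.
  intros Hi.
  assert (Hzero : forall l, ~ In i l ->
    list_sum (map (fun k => if Nat.eqb k i then 1%nat else 0%nat) l) = 0%nat).
  { induction l as [|b l IH]; simpl; intros Hl; auto.
    destruct (Nat.eqb_spec b i); [tauto | auto]. }
  unfold expo_deg, unit_expo. replace n with (i + S (n - S i))%nat at 1 by lia.
  rewrite seq_app, map_app, list_sum_app. simpl. rewrite Nat.eqb_refl, !Hzero; auto.
  - intros Hin. apply in_seq in Hin. lia.
  - intros Hin. apply in_seq in Hin. lia.
Qed.

Definition expo4 (n i j k l : nat) : expo :=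
  add_expo (add_expo (unit_expo n i) (unit_expo n j)) (add_expo (unit_expo n k) (unit_expo n l)).

Lemma length_expo4 n i j k l : length (expo4 n i j k l) = n.
Proof. unfold expo4. rewrite !length_add_expo, !length_unit_expo. lia. Qed.

Lemma expo_deg_expo4 n i j k l : (i < n)%nat -> (j < n)%nat -> (k < n)%nat -> (l < n)%nat ->
  expo_deg (expo4 n i j k l) = 4%nat.
Proof.
  intros. unfold expo4.
  rewrite !expo_deg_add_expo, !expo_deg_unit_expo;
    rewrite ?length_add_expo, ?length_unit_expo; auto.
Qed.

Lemma poly_on_quad_mul n A B : poly_on n 4 (poly_mul (quad_poly n A) (quad_poly n B)).
Proof.
  apply Forall_forall. intros t Ht.
  apply in_flat_map in Ht as [s [Hs Ht]]. apply in_map_iff in Ht as [u [<- Hu]].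
  apply in_flat_map in Hs as [i [Hi Hs]]. apply in_flat_map in Hu as [k [Hk Hu]].
  apply in_map_iff in Hs as [j [<- Hj]]. apply in_map_iff in Hu as [l [<- Hl]].
  apply in_seq in Hi, Hj, Hk, Hl. simpl.
  fold (expo4 n i j k l). rewrite length_expo4, expo_deg_expo4 by lia. lia.
Qed.

(** * The inner product of Harm_2 and its reproducing kernel *)

Lemma add_expo_map f g n :
  add_expo (map f (seq 0 n)) (map g (seq 0 n)) = map (fun k => (f k + g k)%nat) (seq 0 n).
Proof.
  unfold add_expo. induction (seq 0 n) as [|a s IH]; simpl; auto.
  rewrite IH. reflexivity.
Qed.

Definition indicator (i k : nat) : nat := if Nat.eqb k i then 1%nat else 0%nat.

Lemma expo4_map n i j k l :
  expo4 n i j k l =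
  map (fun t => (indicator i t + indicator j t + (indicator k t + indicator l t))%nat) (seq 0 n).
Proof. unfold expo4, unit_expo. rewrite !add_expo_map. reflexivity. Qed.

Lemma forallb_even_seq_false (f : nat -> nat) n t : (t < n)%nat -> Nat.even (f t) = false ->
  forallb Nat.even (map f (seq 0 n)) = false.
Proof.
  intros Ht Hodd. apply Bool.not_true_iff_false. intros Hall.
  rewrite forallb_forall in Hall. rewrite Hall in Hodd; [discriminate |].
  apply in_map, in_seq. lia.
Qed.

Lemma forallb_even_seq_true (f : nat -> nat) n :
  (forall t, (t < n)%nat -> Nat.even (f t) = true) -> forallb Nat.even (map f (seq 0 n)) = true.
Proof.
  intros Heven. apply forallb_forall. intros a Ha.
  apply in_map_iff in Ha as [t [<- Ht]]. apply in_seq in Ht. apply Heven. lia.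
Qed.

Ltac decide_eqb := repeat match goal with |- context [Nat.eqb ?a ?b] =>
  destruct (Nat.eqb_spec a b); try (exfalso; congruence) end.

(* Case analysis on the coincidences among i, j, k, l: either some index
   occurs an odd number of times (moment 0), or the exponent is 4 e_i (moment
   3!! = 3) or e_i + e_i + e_k + e_k with i <> k (moment 1). *)
Lemma sphere_moment_expo4 n i j k l :
  (i < n)%nat -> (j < n)%nat -> (k < n)%nat -> (l < n)%nat ->
  sphere_moment n (expo4 n i j k l) =
  (kdelta i j * kdelta k l + kdelta i k * kdelta j l + kdelta i l * kdelta j k)
  / (INR n * INR (n + 2)).
Proof.
  intros Hi Hj Hk Hl.
  assert (INR n <> 0) by (apply not_0_INR; lia).
  assert (INR (n + 2) <> 0) by (apply not_0_INR; lia).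
  unfold sphere_moment. rewrite expo_deg_expo4 by auto. simpl (Nat.div2 4).
  replace (rprod (map (fun k0 => INR (n + 2 * k0)) (seq 0 2))) with (INR n * INR (n + 2))
    by (simpl; rewrite Nat.add_0_r; ring).
  rewrite expo4_map, map_map.
  fold (prodn n (fun t => oddfact (Nat.div2
    (indicator i t + indicator j t + (indicator k t + indicator l t))))).
  destruct (Nat.eq_dec i j); destruct (Nat.eq_dec i k); destruct (Nat.eq_dec i l);
  destruct (Nat.eq_dec j k); destruct (Nat.eq_dec j l); destruct (Nat.eq_dec k l);
  subst; try (exfalso; congruence);
  first
  [ match goal with |- context [forallb _ (map ?F _)] =>
      match goal with t : nat |- _ =>
        rewrite (forallb_even_seq_false F n t)
          by (auto; unfold indicator; decide_eqb; reflexivity) end end;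
    unfold kdelta; decide_eqb; field; auto
  | rewrite forallb_even_seq_true by (intros t Ht; unfold indicator; decide_eqb; reflexivity);
    match goal with t : nat |- _ =>
      rewrite (prodn_single n t)
        by (auto; intros t' Ht' Hne; unfold indicator; decide_eqb; simpl; ring) end;
    unfold indicator, kdelta; decide_eqb; simpl; field; auto ].
Qed.

Definition trace (n : nat) (A : mat) : R := sumn n (fun i => A i i).
Definition frob (n : nat) (A B : mat) : R := sumn n (fun i => sumn n (fun j => A i j * B i j)).
Definition transpose (A : mat) : mat := fun i j => A j i.

Lemma harm_ip_expand n A B : (0 < n)%nat ->
  harm_ip n A B =
  sumn n (fun i => sumn n (fun j => sumn n (fun k => sumn n (fun l =>
    A i j * B k l * ((kdelta i j * kdelta k l + kdelta i k * kdelta j l + kdelta i l * kdelta j k)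
                     / (INR n * INR (n + 2))))))).
Proof.
  intros Hn. unfold harm_ip, sphere_avg. rewrite rsum_poly_mul, rsum_quad_poly.
  apply sumn_ext; intros i Hi. apply sumn_ext; intros j Hj. rewrite rsum_quad_poly.
  apply sumn_ext; intros k Hk. apply sumn_ext; intros l Hl. simpl.
  fold (expo4 n i j k l). rewrite sphere_moment_expo4; auto.
Qed.

Lemma harm_ip_formula n A B : (0 < n)%nat ->
  harm_ip n A B =
  (trace n A * trace n B + frob n A B + frob n A (transpose B)) / (INR n * INR (n + 2)).
Proof.
  intros Hn. rewrite harm_ip_expand by auto. set (c := / (INR n * INR (n + 2))).
  transitivity (sumn n (fun i => sumn n (fun j =>
    c * (trace n B * (kdelta i j * A i j)) + c * (A i j * B i j) + c * (A i j * B j i)))).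
  - apply sumn_ext; intros i Hi. apply sumn_ext; intros j Hj.
    transitivity (sumn n (fun k =>
      c * A i j * kdelta i j * (kdelta k k * B k k) + c * A i j * (kdelta i k * B k j)
      + c * A i j * (kdelta j k * B k i))).
    + apply sumn_ext; intros k Hk.
      transitivity (sumn n (fun l =>
        c * A i j * kdelta i j * (kdelta k l * B k l) + c * A i j * kdelta i k * (kdelta j l * B k l)
        + c * A i j * kdelta j k * (kdelta i l * B k l))).
      * apply sumn_ext; intros l Hl. unfold c, Rdiv. ring.
      * rewrite !sumn_plus, !sumn_scal, !sumn_kdelta, kdelta_refl by auto. ring.
    + rewrite !sumn_plus, !sumn_scal, !sumn_kdelta by auto. unfold trace.
      rewrite (sumn_ext n (fun k => kdelta k k * B k k) (fun k => B k k))
        by (intros; rewrite kdelta_refl; ring).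
      ring.
  - rewrite (sumn_ext n _ (fun i =>
      c * trace n B * A i i + c * sumn n (fun j => A i j * B i j)
      + c * sumn n (fun j => A i j * transpose B i j))).
    + rewrite !sumn_plus, !sumn_scal. unfold trace, frob, c, Rdiv. ring.
    + intros i Hi. rewrite !sumn_plus, !sumn_scal, sumn_kdelta by auto.
      unfold transpose. ring.
Qed.

Lemma harm_ip_harm2_r n A B : (0 < n)%nat -> is_harm2 n B ->
  harm_ip n A B = 2 / (INR n * INR (n + 2)) * frob n A B.
Proof.
  intros Hn [Bsym Btr]. fold (sumn n (fun i => B i i)) in Btr. fold (trace n B) in Btr.
  rewrite harm_ip_formula, Btr by auto.
  replace (frob n A (transpose B)) with (frob n A B).
  - unfold Rdiv. ring.
  - apply sumn_ext; intros i Hi. apply sumn_ext; intros j Hj.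
    unfold transpose. rewrite Bsym; auto.
Qed.

Lemma harm_ip_comm n A B : (0 < n)%nat -> harm_ip n A B = harm_ip n B A.
Proof.
  intros Hn. rewrite !harm_ip_formula by auto.
  replace (frob n B A) with (frob n A B)
    by (apply sumn_ext; intros i _; apply sumn_ext; intros j _; ring).
  replace (frob n B (transpose A)) with (frob n A (transpose B)).
  - unfold Rdiv. ring.
  - unfold frob, transpose. rewrite sumn_swap.
    apply sumn_ext; intros i _; apply sumn_ext; intros j _; ring.
Qed.

Lemma harm_ip_mscale_l n c A B : (0 < n)%nat -> harm_ip n (mscale c A) B = c * harm_ip n A B.
Proof.
  intros Hn. rewrite !harm_ip_expand by auto.
  do 4 (rewrite <- sumn_scal; apply sumn_ext; intros ? _).
  unfold mscale. ring.
Qed.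

Lemma dot_self x : dot x x = sumn (length x) (fun k => xi x k * xi x k).
Proof.
  unfold dot, sumn, xi. replace (combine x x) with (map (fun a => (a, a)) x).
  - rewrite map_map. simpl. clear. induction x as [|a x IH]; simpl; auto.
    rewrite <- seq_shift, map_map, IH. reflexivity.
  - induction x as [|a x IH]; simpl; auto. rewrite IH. reflexivity.
Qed.

Lemma on_sphere_sumn n x : on_sphere n x -> sumn n (fun i => xi x i * xi x i) = 1.
Proof. intros [Hlen Hdot]. rewrite dot_self, Hlen in Hdot. exact Hdot. Qed.

Definition kernel_mat (n : nat) (x : point) : mat :=
  fun i j => INR n * INR (n + 2) / 2 * (xi x i * xi x j - kdelta i j / INR n).

Lemma kernel_mat_harm2 n x : (0 < n)%nat -> on_sphere n x -> is_harm2 n (kernel_mat n x).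
Proof.
  intros Hn Hx. assert (INR n <> 0) by (apply not_0_INR; lia). split.
  - intros i j _ _. unfold kernel_mat, kdelta. rewrite Nat.eqb_sym. ring.
  - fold (sumn n (fun i => kernel_mat n x i i)). unfold kernel_mat.
    rewrite (sumn_ext n _ (fun i => INR n * INR (n + 2) / 2 * (xi x i * xi x i)
                                   + (- INR (n + 2) / 2) * 1))
      by (intros; rewrite kdelta_refl; field; auto).
    rewrite sumn_plus, sumn_scal, on_sphere_sumn, sumn_const by auto. field.
Qed.

Lemma frob_kernel_mat n x Q : (0 < n)%nat ->
  frob n (kernel_mat n x) Q = INR n * INR (n + 2) / 2 * (quad_form n Q x - trace n Q / INR n).
Proof.
  intros Hn. assert (INR n <> 0) by (apply not_0_INR; lia).
  set (c := INR n * INR (n + 2) / 2). unfold frob, quad_form, trace.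
  rewrite (sumn_ext n _ (fun i => c * sumn n (fun j => Q i j * (xi x i * xi x j))
                                  + (- c / INR n) * sumn n (fun j => kdelta i j * Q i j))).
  - rewrite sumn_plus, !sumn_scal.
    rewrite (sumn_ext n (fun i => sumn n (fun j => kdelta i j * Q i j)) (fun i => Q i i))
      by (intros; apply sumn_kdelta; auto).
    field. auto.
  - intros i Hi. rewrite <- !sumn_scal, <- sumn_plus.
    apply sumn_ext; intros j Hj. unfold kernel_mat. fold c. field. auto.
Qed.

Lemma kernel_mat_reproduces n x Q : (0 < n)%nat -> is_harm2 n Q ->
  harm_ip n (kernel_mat n x) Q = quad_form n Q x.
Proof.
  intros Hn HQ. assert (INR n <> 0) by (apply not_0_INR; lia).
  assert (INR (n + 2) <> 0) by (apply not_0_INR; lia).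
  destruct HQ as [Qsym Qtr]. fold (sumn n (fun i => Q i i)) (trace n Q) in Qtr.
  rewrite harm_ip_harm2_r, frob_kernel_mat, Qtr by (auto; split; auto). field. auto.
Qed.

Lemma quad_form_kernel_mat n x : (0 < n)%nat -> on_sphere n x ->
  quad_form n (kernel_mat n x) x = (INR n + 2) * (INR n - 1) / 2.
Proof.
  intros Hn Hx. assert (INR n <> 0) by (apply not_0_INR; lia).
  set (c := INR n * INR (n + 2) / 2). unfold quad_form.
  rewrite (sumn_ext n _ (fun i => c * (xi x i * xi x i) * sumn n (fun j => xi x j * xi x j)
                                  + (- c / INR n) * sumn n (fun j => kdelta i j * (xi x i * xi x j)))).
  - rewrite sumn_plus, sumn_scal, <- sumn_mul_r, sumn_scal, on_sphere_sumn by auto.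
    rewrite (sumn_ext n (fun i => sumn n (fun j => kdelta i j * (xi x i * xi x j)))
                        (fun i => xi x i * xi x i))
      by (intros; apply sumn_kdelta; auto).
    rewrite on_sphere_sumn by auto. unfold c. rewrite plus_INR. simpl (INR 2). field. auto.
  - intros i Hi. rewrite <- !sumn_scal, <- sumn_plus.
    apply sumn_ext; intros j Hj. unfold kernel_mat. fold c. field. auto.
Qed.

Lemma reproducing_quad_form n x K Q : is_reproducing n x K -> length x = n -> is_harm2 n Q ->
  harm_ip n K Q = quad_form n Q x.
Proof. intros [_ HK] Hx HQ. rewrite HK, poly_eval_quad; auto. Qed.

Lemma reproducing_norm n x K : (0 < n)%nat -> on_sphere n x -> is_reproducing n x K ->
  harm_ip n K K = (INR n + 2) * (INR n - 1) / 2.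
Proof.
  intros Hn Hx HK. pose proof (proj1 Hx) as Hlen.
  rewrite reproducing_quad_form with (x := x), <- kernel_mat_reproduces, harm_ip_comm,
    reproducing_quad_form with (x := x), quad_form_kernel_mat; auto.
  - apply kernel_mat_harm2; auto.
  - apply HK.
  - apply HK.
Qed.

(** * Designs *)

Lemma design_length_pos n t X : spherical_design n t X -> 0 < INR (length X).
Proof. intros [HX _]. destruct X; [congruence |]. apply lt_0_INR. simpl. lia. Qed.

Lemma design_on_sphere n t X x : spherical_design n t X -> In x X -> on_sphere n x.
Proof. intros [_ [HX _]] Hx. rewrite Forall_forall in HX. auto. Qed.

Lemma design_sum_quad_form_mul n X A B : spherical_design n 4 X ->
  rsum (map (fun x => quad_form n A x * quad_form n B x) X) = INR (length X) * harm_ip n A B.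
Proof.
  intros HX. pose proof (design_length_pos _ _ _ HX) as HL. destruct HX as [_ [Hsph Havg]].
  unfold harm_ip. rewrite <- Havg by apply poly_on_quad_mul.
  rewrite Forall_forall in Hsph.
  rewrite (rsum_map_ext _ (poly_eval (poly_mul (quad_poly n A) (quad_poly n B)))).
  - field. lra.
  - intros x Hx. rewrite poly_eval_quad_mul; auto. apply Hsph; auto.
Qed.

Lemma bessel_rsum {A} (l : list A) (F : A -> R) (e : nat -> A -> R) (c : nat -> R) D L :
  (forall i j, (i < D)%nat -> (j < D)%nat ->
     rsum (map (fun x => e i x * e j x) l) = L * kdelta i j) ->
  (forall j, (j < D)%nat -> rsum (map (fun x => F x * e j x) l) = L * c j) ->
  L * sumn D (fun j => c j * c j) <= rsum (map (fun x => F x * F x) l).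
Proof.
  intros Hee HFe. set (S x := sumn D (fun j => c j * e j x)).
  assert (HFS : rsum (map (fun x => F x * S x) l) = L * sumn D (fun j => c j * c j)).
  { unfold S. rewrite (rsum_map_ext _ (fun x => sumn D (fun j => c j * (F x * e j x))))
      by (intros x _; rewrite <- sumn_scal; apply sumn_ext; intros; ring).
    rewrite rsum_map_sumn, <- sumn_scal. apply sumn_ext; intros j Hj.
    rewrite rsum_map_scal, HFe by auto. ring. }
  assert (HSS : rsum (map (fun x => S x * S x) l) = L * sumn D (fun j => c j * c j)).
  { unfold S. rewrite (rsum_map_ext _ (fun x => sumn D (fun i => c i * (e i x * S x)))).
    - rewrite rsum_map_sumn, <- sumn_scal. apply sumn_ext; intros i Hi.
      rewrite rsum_map_scal. unfold S.
      rewrite (rsum_map_ext _ (fun x => sumn D (fun j => c j * (e i x * e j x))))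
        by (intros x _; rewrite <- sumn_scal; apply sumn_ext; intros; ring).
      rewrite rsum_map_sumn.
      rewrite (sumn_ext D _ (fun j => L * c j * kdelta i j))
        by (intros j Hj; rewrite rsum_map_scal, Hee by auto; ring).
      rewrite (sumn_ext D _ (fun j => kdelta i j * (L * c j))) by (intros; ring).
      rewrite sumn_kdelta by auto. ring.
    - intros x _. unfold S. rewrite sumn_mul_r. apply sumn_ext; intros; ring. }
  assert (Hsq : 0 <= rsum (map (fun x => (F x - S x) * (F x - S x)) l))
    by (apply rsum_map_nonneg; intros; apply Rle_0_sqr).
  rewrite (rsum_map_ext _ (fun x => F x * F x + (-2) * (F x * S x) + S x * S x)) in Hsq
    by (intros; ring).
  rewrite !rsum_map_plus, rsum_map_scal, HFS, HSS in Hsq. lra.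
Qed.

Lemma sumn_sq_basis_le n X D E y K :
  spherical_design n 4 X -> orthonormal_basis n D E ->
  is_reproducing n y K -> length y = n ->
  sumn D (fun j => quad_form n (E j) y * quad_form n (E j) y) <= harm_ip n K K.
Proof.
  intros HX [HE1 HE2] HK Hy. pose proof (design_length_pos _ _ _ HX) as HL.
  apply (Rmult_le_reg_l (INR (length X))); auto.
  rewrite <- (design_sum_quad_form_mul n X K K) by auto.
  apply bessel_rsum with (e := fun j => quad_form n (E j)).
  - intros i j Hi Hj. rewrite design_sum_quad_form_mul, HE2 by auto. reflexivity.
  - intros j Hj. rewrite design_sum_quad_form_mul by auto.
    rewrite reproducing_quad_form with (x := y); auto.
Qed.

Lemma vneg_involutive x : vneg (vneg x) = x.
Proof. unfold vneg. rewrite map_map, (map_ext _ (fun a => a)), map_id by (intros; ring). reflexivity. Qed.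

Lemma xi_vneg x i : xi (vneg x) i = - xi x i.
Proof. unfold xi, vneg. rewrite <- Ropp_0 at 1. apply map_nth. Qed.

Lemma on_sphere_vneg n x : on_sphere n x -> on_sphere n (vneg x).
Proof.
  intros [Hlen Hdot]. unfold vneg at 1. split; [rewrite length_map; auto |].
  rewrite dot_self, length_map, <- Hdot, dot_self.
  apply sumn_ext; intros k _. rewrite xi_vneg. ring.
Qed.

Lemma monomial_vneg a y : length a = length y ->
  monomial a (vneg y) = (-1) ^ expo_deg a * monomial a y.
Proof.
  revert a. induction y as [|y0 y IH]; intros [|a0 a] Ha; simpl in Ha; try discriminate.
  - unfold monomial. simpl. ring.
  - injection Ha as Ha. specialize (IH a Ha). unfold monomial, expo_deg, vneg in *. simpl.
    rewrite IH. replace (- y0) with ((-1) * y0) by ring. rewrite Rpow_mult_distr, pow_add. ring.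
Qed.

Lemma expo_deg0_repeat a : expo_deg a = 0%nat -> a = repeat 0%nat (length a).
Proof.
  unfold expo_deg. induction a as [|a0 a IH]; simpl; intros H; auto.
  f_equal; [lia | apply IH; lia].
Qed.

Lemma expo_deg1_repeat a : expo_deg a = 1%nat ->
  exists p q, a = repeat 0%nat p ++ 1%nat :: repeat 0%nat q.
Proof.
  induction a as [|[|[|a0]] a IH]; unfold expo_deg in *; simpl; intros H; try lia.
  - destruct (IH H) as [p [q ->]]. exists (S p), q. reflexivity.
  - exists 0%nat, (length a). simpl. f_equal. apply expo_deg0_repeat. unfold expo_deg. lia.
Qed.

Lemma expo_deg2_repeat a : expo_deg a = 2%nat ->
  (exists p q, a = repeat 0%nat p ++ 2%nat :: repeat 0%nat q) \/
  (exists p q r, a = repeat 0%nat p ++ 1%nat :: repeat 0%nat q ++ 1%nat :: repeat 0%nat r).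
Proof.
  induction a as [|[|[|[|a0]]] a IH]; unfold expo_deg in *; simpl; intros H; try lia.
  - destruct (IH H) as [[p [q ->]] | [p [q [r ->]]]].
    + left. exists (S p), q. reflexivity.
    + right. exists (S p), q, r. reflexivity.
  - right. destruct (expo_deg1_repeat a) as [q [r ->]]; [unfold expo_deg; lia |].
    exists 0%nat, q, r. reflexivity.
  - left. exists 0%nat, (length a). simpl. f_equal. apply expo_deg0_repeat. unfold expo_deg. lia.
Qed.

Lemma monomial_repeat0 q y : monomial (repeat 0%nat q) y = 1.
Proof.
  revert y. induction q as [|q IH]; intros [|y0 y]; unfold monomial in *; simpl; auto.
  rewrite IH. ring.
Qed.

Lemma monomial_single p q e y : length y = (p + S q)%nat ->
  monomial (repeat 0%nat p ++ e :: repeat 0%nat q) y = xi y p ^ e.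
Proof.
  revert y. induction p as [|p IH]; intros [|y0 y] Hy; simpl in Hy; try lia;
    unfold monomial, xi in *; simpl.
  - fold (monomial (repeat 0%nat q) y). rewrite monomial_repeat0. ring.
  - rewrite IH by lia. ring.
Qed.

Lemma monomial_pair p q r y : length y = (p + S q + S r)%nat ->
  monomial (repeat 0%nat p ++ 1%nat :: repeat 0%nat q ++ 1%nat :: repeat 0%nat r) y
  = xi y p * xi y (p + S q).
Proof.
  revert y. induction p as [|p IH]; intros [|y0 y] Hy; simpl in Hy; try lia;
    unfold monomial, xi in *; simpl.
  - fold (monomial (repeat 0%nat q ++ 1%nat :: repeat 0%nat r) y).
    rewrite monomial_single by lia. unfold xi. ring.
  - rewrite IH by lia. ring.
Qed.

Lemma forallb_even_repeat0 q : forallb Nat.even (repeat 0%nat q) = true.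
Proof. induction q; simpl; auto. Qed.

Lemma oddfact_repeat0 q : rprod (map (fun a => oddfact (Nat.div2 a)) (repeat 0%nat q)) = 1.
Proof. induction q as [|q IH]; simpl; auto. rewrite IH. ring. Qed.

Lemma expo_deg_repeat0 q : expo_deg (repeat 0%nat q) = 0%nat.
Proof. induction q; simpl; auto. Qed.

Lemma sphere_moment_repeat0 m q : sphere_moment m (repeat 0%nat q) = 1.
Proof.
  unfold sphere_moment. rewrite forallb_even_repeat0, oddfact_repeat0, expo_deg_repeat0.
  simpl. field.
Qed.

Lemma sphere_moment_single2 m p q : (0 < m)%nat ->
  sphere_moment m (repeat 0%nat p ++ 2%nat :: repeat 0%nat q) = 1 / INR m.
Proof.
  intros Hm. unfold sphere_moment, expo_deg.
  rewrite forallb_app, list_sum_app, map_app, rprod_app. simpl.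
  rewrite !forallb_even_repeat0, !oddfact_repeat0.
  fold (expo_deg (repeat 0%nat p)) (expo_deg (repeat 0%nat q)). rewrite !expo_deg_repeat0.
  simpl. rewrite Nat.add_0_r. field. apply not_0_INR. lia.
Qed.

Lemma sphere_moment_pair m p q r :
  sphere_moment m (repeat 0%nat p ++ 1%nat :: repeat 0%nat q ++ 1%nat :: repeat 0%nat r) = 0.
Proof. unfold sphere_moment. rewrite forallb_app, forallb_even_repeat0. reflexivity. Qed.

Lemma forallb_even_expo_deg a : forallb Nat.even a = true -> Nat.even (expo_deg a) = true.
Proof.
  unfold expo_deg. induction a as [|a0 a IH]; simpl; intros Heven; auto.
  apply andb_prop in Heven as [H0 Ha]. rewrite Nat.even_add, H0, IH; auto.
Qed.

Lemma sphere_moment_odd m a : Nat.even (expo_deg a) = false -> sphere_moment m a = 0.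
Proof.
  intros Hodd. unfold sphere_moment. destruct (forallb Nat.even a) eqn:Heven; auto.
  apply forallb_even_expo_deg in Heven. congruence.
Qed.

Lemma design_of_moments m t Y : Y <> [] -> Forall (on_sphere m) Y ->
  (forall a, length a = m -> (expo_deg a <= t)%nat ->
     rsum (map (monomial a) Y) / INR (length Y) = sphere_moment m a) ->
  spherical_design m t Y.
Proof.
  intros HY Hsph Hmom. split; [auto | split; [auto |]]. intros p Hp.
  unfold poly_eval, sphere_avg.
  rewrite (rsum_map_swap (fun y t0 => fst t0 * monomial (snd t0) y)).
  unfold Rdiv. rewrite Rmult_comm, <- rsum_map_scal. apply rsum_map_ext. intros [c a] Hca.
  unfold poly_on in Hp. rewrite Forall_forall in Hp. destruct (Hp _ Hca) as [Hlen Hdeg]. simpl in *.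
  rewrite rsum_map_scal, <- Hmom by auto. unfold Rdiv. ring.
Qed.

Lemma rsum_monomial_antipodal m (Z : list point) a : Forall (fun z => length z = m) Z -> length a = m ->
  rsum (map (monomial a) (Z ++ map vneg Z)) = (1 + (-1) ^ expo_deg a) * rsum (map (monomial a) Z).
Proof.
  intros HZ Ha. rewrite Forall_forall in HZ.
  rewrite map_app, rsum_app, map_map.
  rewrite (rsum_map_ext (fun z => monomial a (vneg z)) (fun z => (-1) ^ expo_deg a * monomial a z))
    by (intros z Hz; apply monomial_vneg; rewrite HZ; auto).
  rewrite rsum_map_scal. ring.
Qed.

Lemma antipodal_design3 m (Z : list point) : (0 < m)%nat -> Z <> [] -> Forall (on_sphere m) Z ->
  (forall p q, (p < m)%nat -> (q < m)%nat ->
     rsum (map (fun z => xi z p * xi z q) Z) = INR (length Z) * kdelta p q / INR m) ->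
  spherical_design m 3 (Z ++ map vneg Z).
Proof.
  intros Hm HZ Hsph Hmom2.
  assert (HL : 0 < INR (length Z)) by (destruct Z; [congruence |]; apply lt_0_INR; simpl; lia).
  assert (Hm' : 0 < INR m) by (apply lt_0_INR; lia).
  assert (Hlen : Forall (fun z => length z = m) Z)
    by (apply (Forall_impl _ (fun z Hz => proj1 Hz) Hsph)).
  apply design_of_moments.
  - destruct Z; [congruence | discriminate].
  - apply Forall_app. split; auto. apply Forall_map.
    apply (Forall_impl _ (on_sphere_vneg m) Hsph).
  - intros a Ha Hdeg. rewrite (rsum_monomial_antipodal m), length_app, length_map, plus_INR by auto.
    rewrite Forall_forall in Hlen.
    assert (expo_deg a = 0 \/ expo_deg a = 1 \/ expo_deg a = 2 \/ expo_deg a = 3)%nat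
      as [Hd | [Hd | [Hd | Hd]]] by lia.
    + rewrite Hd, (expo_deg0_repeat a Hd), Ha, sphere_moment_repeat0.
      rewrite (rsum_map_ext _ (fun _ => 1)), rsum_map_const by (intros; apply monomial_repeat0).
      simpl. field. lra.
    + rewrite sphere_moment_odd, Hd by (rewrite Hd; reflexivity). simpl. unfold Rdiv. ring.
    + destruct (expo_deg2_repeat a Hd) as [[p [q Ea]] | [p [q [r Ea]]]].
      * assert (length a = p + S q)%nat
          by (rewrite Ea, length_app; simpl; rewrite !repeat_length; lia).
        rewrite (rsum_map_ext _ (fun z => xi z p * xi z p))
          by (intros z Hz; rewrite Ea, monomial_single by (rewrite Hlen; auto; lia); ring).
        rewrite Hmom2, Hd, Ea, sphere_moment_single2, kdelta_refl by (auto; lia).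
        simpl. field. lra.
      * assert (length a = p + S q + S r)%nat
          by (rewrite Ea, !length_app; simpl; rewrite length_app; simpl; rewrite !repeat_length; lia).
        rewrite (rsum_map_ext _ (fun z => xi z p * xi z (p + S q)))
          by (intros z Hz; rewrite Ea, monomial_pair by (rewrite Hlen; auto; lia); ring).
        rewrite Hmom2, Ea, sphere_moment_pair by lia. unfold kdelta.
        destruct (Nat.eqb_spec p (p + S q)); [lia |]. unfold Rdiv. ring.
    + rewrite sphere_moment_odd, Hd by (rewrite Hd; reflexivity). simpl. unfold Rdiv. ring.
Qed.

Lemma rsum_antipodal_half (X X' : list point) (h : point -> R) :
  NoDup X -> (forall x, In x X -> In (vneg x) X) -> NoDup X' -> incl X' X ->
  (2 * length X' = length X)%nat -> (forall x y, In x X' -> In y X' -> y <> vneg x) ->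
  (forall x, h (vneg x) = h x) ->
  rsum (map h X) = 2 * rsum (map h X').
Proof.
  intros HX Hanti HX' Hincl Hlen Hnoanti Heven.
  assert (Hperm : Permutation (X' ++ map vneg X') X).
  { apply NoDup_Permutation_bis.
    - apply NoDup_app; auto.
      + apply FinFun.Injective_map_NoDup; auto. intros a b Hab.
        rewrite <- (vneg_involutive a), Hab, vneg_involutive. reflexivity.
      + intros a Ha Hb. apply in_map_iff in Hb as [y [<- Hy]].
        apply (Hnoanti y (vneg y)); auto.
    - rewrite length_app, length_map. lia.
    - intros a Ha. apply in_app_or in Ha as [Ha | Ha]; auto.
      apply in_map_iff in Ha as [y [<- Hy]]. auto. }
  rewrite <- (rsum_perm _ _ (Permutation_map h Hperm)), map_app, rsum_app, map_map.
  rewrite (rsum_map_ext (fun x => h (vneg x)) h) by auto. ring.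
Qed.

(** * The normalized kernels in orthonormal coordinates *)

Lemma nth_map_seq (f : nat -> R) m j : (j < m)%nat -> nth j (map f (seq 0 m)) 0 = f j.
Proof.
  intros Hj. rewrite (nth_indep _ 0 (f 0%nat)) by (rewrite length_map, length_seq; auto).
  rewrite map_nth, seq_nth; auto.
Qed.

Lemma quad_form_vneg n A x : quad_form n A (vneg x) = quad_form n A x.
Proof.
  unfold quad_form. apply sumn_ext; intros i _. apply sumn_ext; intros j _.
  rewrite !xi_vneg. ring.
Qed.

Lemma div_sqrt_mul a u v : 0 < a -> u / sqrt a * (v / sqrt a) = / a * (u * v).
Proof.
  intros Ha. assert (sqrt a <> 0) by (apply Rgt_not_eq, sqrt_lt_R0; auto).
  replace (/ a) with (/ (sqrt a * sqrt a)) by (rewrite sqrt_sqrt; auto; lra).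
  field. auto.
Qed.

Section HarmonicEmbedding.

Variables (n D : nat) (X : list point) (K : point -> mat) (E : nat -> mat).
Hypothesis n_pos : (0 < n)%nat.
Hypothesis D_pos : (0 < D)%nat.
Hypothesis D_dim : INR D = (INR n + 2) * (INR n - 1) / 2.
Hypothesis X_design : spherical_design n 4 X.
Hypothesis K_repr : forall x, on_sphere n x -> is_reproducing n x (K x).
Hypothesis E_orthonormal : orthonormal_basis n D E.

Let G (x : point) : point := coords n D E (G_of n (K x)).

Lemma harm_ip_K_self x : on_sphere n x -> harm_ip n (K x) (K x) = INR D.
Proof. intros Hx. rewrite D_dim. apply (reproducing_norm n x); auto. Qed.

Lemma xi_G x j : on_sphere n x -> (j < D)%nat -> xi (G x) j = quad_form n (E j) x / sqrt (INR D).
Proof.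
  intros Hx Hj. unfold G, coords, xi, G_of. rewrite nth_map_seq by auto.
  rewrite harm_ip_mscale_l, harm_ip_K_self, reproducing_quad_form with (x := x) by
    (auto; try apply (proj1 Hx); apply (proj1 E_orthonormal); auto).
  unfold Rdiv. ring.
Qed.

(* Bessel's inequality bounds each term by ||K_x||^2 = D, while orthonormality
   and the design property make their sum over X equal to D |X|. *)
Lemma sumn_sq_basis_design x : In x X ->
  sumn D (fun j => quad_form n (E j) x * quad_form n (E j) x) = INR D.
Proof.
  set (s y := sumn D (fun j => quad_form n (E j) y * quad_form n (E j) y)).
  assert (Hle : forall y, In y X -> s y <= INR D).
  { intros y Hy. pose proof (design_on_sphere _ _ _ _ X_design Hy) as Hsph.
    rewrite <- (harm_ip_K_self y Hsph).
    apply (sumn_sq_basis_le n X); auto. apply Hsph. }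
  assert (Htotal : rsum (map s X) = INR (length X) * INR D).
  { unfold s. rewrite rsum_map_sumn.
    rewrite (sumn_ext D _ (fun _ => INR (length X))), sumn_const by
      (intros j Hj; rewrite design_sum_quad_form_mul, (proj2 E_orthonormal) by auto;
       rewrite Nat.eqb_refl; ring).
    ring. }
  intros Hx. apply Rminus_diag_uniq_sym.
  apply (rsum_map_nonneg_eq0 (fun y => INR D - s y) X); auto.
  - intros y Hy. specialize (Hle y Hy). lra.
  - rewrite (rsum_map_ext _ (fun y => INR D + (-1) * s y)) by (intros; ring).
    rewrite rsum_map_plus, rsum_map_scal, rsum_map_const, Htotal. ring.
Qed.

Lemma G_on_sphere x : In x X -> on_sphere D (G x).
Proof.
  intros Hx. pose proof (design_on_sphere _ _ _ _ X_design Hx) as Hsph.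
  assert (Hlen : length (G x) = D) by (unfold G, coords; rewrite length_map, length_seq; auto).
  split; auto. rewrite dot_self, Hlen.
  rewrite (sumn_ext D _ (fun j => / INR D * (quad_form n (E j) x * quad_form n (E j) x))).
  - rewrite sumn_scal, sumn_sq_basis_design by auto. field. apply not_0_INR. lia.
  - intros j Hj. rewrite xi_G, div_sqrt_mul by (auto; apply lt_0_INR; auto). reflexivity.
Qed.

Lemma G_second_moments (X' : list point) p q :
  NoDup X -> (forall x, In x X -> In (vneg x) X) -> NoDup X' -> incl X' X ->
  (2 * length X' = length X)%nat -> (forall x y, In x X' -> In y X' -> y <> vneg x) ->
  (p < D)%nat -> (q < D)%nat ->
  rsum (map (fun x => xi (G x) p * xi (G x) q) X') = INR (length X') * kdelta p q / INR D.
Proof.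
  intros HX Hanti HX' Hincl Hlen Hnoanti Hp Hq.
  assert (Hsum : rsum (map (fun x => quad_form n (E p) x * quad_form n (E q) x) X)
                 = 2 * rsum (map (fun x => quad_form n (E p) x * quad_form n (E q) x) X'))
    by (apply rsum_antipodal_half; auto; intros x; rewrite !quad_form_vneg; reflexivity).
  rewrite design_sum_quad_form_mul, (proj2 E_orthonormal), <- Hlen, mult_INR in Hsum by auto.
  fold (kdelta p q) in Hsum.
  rewrite (rsum_map_ext _ (fun x => / INR D * (quad_form n (E p) x * quad_form n (E q) x))).
  - rewrite rsum_map_scal.
    replace (rsum _) with (INR (length X') * kdelta p q) by (simpl in Hsum; lra).
    unfold Rdiv. ring.
  - intros x Hx. pose proof (design_on_sphere _ _ _ _ X_design (Hincl x Hx)) as Hsph.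
    rewrite !xi_G, div_sqrt_mul by (auto; apply lt_0_INR; auto). reflexivity.
Qed.

End HarmonicEmbedding.

Lemma INR_half_dim d : INR (d * (d + 3) / 2) = INR d * (INR d + 3) / 2.
Proof.
  assert (exists k, d * (d + 3) = 2 * k)%nat as [k Hk].
  { induction d as [|d [k Hk]]; [exists 0%nat; reflexivity |]. exists (k + d + 2)%nat. nia. }
  rewrite Hk, Nat.mul_comm, Nat.div_mul by lia.
  apply (f_equal INR) in Hk. rewrite !mult_INR, plus_INR in Hk. simpl in Hk. lra.
Qed.

Theorem corollary1p3 (d : nat) (X X' : list point) (K : point -> mat) (E : nat -> mat) :
  (1 <= d)%nat ->
  NoDup X ->
  spherical_design (S d) 4 X ->
  (forall x, In x X -> In (vneg x) X) ->
  NoDup X' ->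
  incl X' X ->
  (2 * length X' = length X)%nat ->
  (forall x y, In x X' -> In y X' -> y <> vneg x) ->
  (forall x, on_sphere (S d) x -> is_reproducing (S d) x (K x)) ->
  orthonormal_basis (S d) (d * (d + 3) / 2) E ->
  spherical_design (d * (d + 3) / 2) 3
    (map (fun x => coords (S d) (d * (d + 3) / 2) E (G_of (S d) (K x))) X' ++
     map (fun x => vneg (coords (S d) (d * (d + 3) / 2) E (G_of (S d) (K x)))) X').
Proof.
  intros Hd HX Hdesign Hanti HX' Hincl Hlen Hnoanti HK HE.
  assert (HDdim : INR (d * (d + 3) / 2) = (INR (S d) + 2) * (INR (S d) - 1) / 2)
    by (rewrite INR_half_dim, S_INR; field).
  assert (HDpos : (0 < d * (d + 3) / 2)%nat).
  { apply INR_lt. rewrite INR_half_dim. apply le_INR in Hd. simpl in *. nra. }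
  assert (HX'ne : X' <> []).
  { intros ->. pose proof (design_length_pos _ _ _ Hdesign) as HL.
    rewrite <- Hlen in HL. simpl in HL. lra. }
  rewrite <- (map_map _ vneg). apply antipodal_design3; auto.
  - destruct X'; [congruence | discriminate].
  - apply Forall_forall. intros g Hg. apply in_map_iff in Hg as [x [<- Hx]].
    apply (G_on_sphere (S d) _ X K E); auto with arith.
  - intros p q Hp Hq. rewrite length_map, map_map.
    apply (G_second_moments (S d) _ X K E); auto with arith.
Qed.
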